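(* For any $n\in\mathbb{N}$ with $n\geq2$, the free monoid of rank $2^{n-1}$ embeds into $\mathrm{lps}_n$.
   Context: Let $\mathcal{A}_n=\{1<2<\cdots<n\}$. An lPS tableau is a finite (possibly empty) sequence of nonempty bottom-justified columns of boxes filled with positive integers, such that the entries of each column are strictly decreasing from top to bottom and the bottom entries of the columns form a weakly increasing sequence from left to right. Right insertion of a symbol $a$ into an lPS tableau $B$: if $a$ is greater than or equal to every entry of the bottom row, append a new column consisting of $a$ at the right end; otherwise, let $z$ be the leftmost bottom-row entry with $z>a$ and put $a$ in a new box at the bottom of the column of $z$ (the previous entries of that column move up one box). For $w=w_1\cdots w_k$, $\mathfrak{R}_\ell(w)$ is obtained by starting with the empty tableau and right-inserting $w_1,\dots,w_k$ in order. The monoid $\mathrm{lps}_n$ is the quotient of the free monoid $\mathcal{A}_n^*$ by the congruence $u\equiv v\iff\mathfrak{R}_\ell(u)=\mathfrak{R}_\ell(v)$. *)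

From mathcomp Require Import all_boot.
Set Implicit Arguments. Unset Strict Implicit. Unset Printing Implicit Defensive.

(* Alphabet A_n = {1 < ... < n} is represented by 'I_n (symbol i+1 as i : 'I_n);
   the order is preserved, so insertion behaves identically. *)

(* An lPS tableau: a list of columns from left to right; each column is a
   list of its entries read from BOTTOM to TOP (so the head is the bottom entry). *)
Definition lps_tableau := seq (seq nat).

Fixpoint rinsert (a : nat) (B : lps_tableau) : lps_tableau :=
  match B with
  | [::] => [:: [:: a]]
  | c :: B' => if a < head a c then (a :: c) :: B' else c :: rinsert a B'
  end.

Definition Rl (n : nat) (w : seq 'I_n) : lps_tableau :=
  foldl (fun B a => rinsert a B) [::] (map (@nat_of_ord n) w).

Definition lps_equiv (n : nat) (u v : seq 'I_n) : Prop := Rl u = Rl v.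

(* An embedding of the free monoid on 'I_k (words seq 'I_k) into lps_n, given
   via a choice of representative words: f is a monoid homomorphism into the
   quotient A_n^*/≡ and is injective. *)
Definition free_monoid_embeds_lps (k n : nat) : Prop :=
  exists f : seq 'I_k -> seq 'I_n,
    [/\ lps_equiv (f [::]) [::],
        (forall u v, lps_equiv (f (u ++ v)) (f u ++ f v))
      & (forall u v, lps_equiv (f u) (f v) -> u = v)].

From mathcomp Require Import all_boot.
Set Implicit Arguments.
Unset Strict Implicit.
Unset Printing Implicit Defensive.

(* Over the two smallest letters 1 < 2 of A_n (the ordinals 0 and 1 here),
   inserting the word 1 into a tableau whose bottom row consists of 1's
   appends the column (1), and inserting the word 2 1 appends the column
   (2 over 1): the 2 starts a new column and the 1 then goes under it.  So
   the submonoid generated by 1 and 2 1 is free of rank 2, and the free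
   monoid of any finite rank embeds into it through the prefix code
   i |-> 1^i 2 1. *)

Section UnaryCode.

Variables (T : eqType) (x y : T).
Hypothesis neq_xy : x != y.

Lemma nseq_cons_inj i j (s t : seq T) :
  nseq i x ++ y :: s = nseq j x ++ y :: t -> i = j /\ s = t.
Proof.
elim: i j => [|i IH] [|j] /=; first by case.
- by case=> /eqP; rewrite eq_sym (negbTE neq_xy).
- by case=> /eqP; rewrite (negbTE neq_xy).
by case=> /IH [-> ->].
Qed.

Definition unary_code (w : seq nat) : seq T :=
  flatten [seq rcons (nseq i x) y | i <- w].

Lemma unary_code_cat w1 w2 :
  unary_code (w1 ++ w2) = unary_code w1 ++ unary_code w2.
Proof. by rewrite /unary_code map_cat flatten_cat. Qed.

Lemma unary_code_inj : injective unary_code.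
Proof.
rewrite /unary_code; elim=> [|i w IH] [|j w'] //=; rewrite ?cat_rcons //.
- by case: j.
- by case: i.
by case/nseq_cons_inj=> -> /IH ->.
Qed.

End UnaryCode.

Definition insert_word (B : lps_tableau) (w : seq nat) : lps_tableau :=
  foldl (fun B a => rinsert a B) B w.

Lemma insert_word_cat B w1 w2 :
  insert_word B (w1 ++ w2) = insert_word (insert_word B w1) w2.
Proof. exact: foldl_cat. Qed.

Lemma rinsert_new_column a B :
  all (fun c => head a c <= a) B -> rinsert a B = rcons B [:: a].
Proof. by elim: B => [|c B IH] //= /andP[le_ca /IH ->]; rewrite ltnNge le_ca. Qed.

Lemma rinsert_last_column a B c :
  all (fun c => head a c <= a) B -> a < head a c ->
  rinsert a (rcons B c) = rcons B (a :: c).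
Proof.
elim: B => [|c' B IH] /=; first by move=> _ ->.
by move=> /andP[le_ca /IH IHB] /IHB ->; rewrite ltnNge le_ca.
Qed.

(* The default [1] of [head] makes empty columns fail the test. *)
Definition zero_bottomed (B : lps_tableau) : bool :=
  all (fun c => head 1 c == 0) B.

Lemma zero_bottomed_head_le a B :
  zero_bottomed B -> all (fun c => head a c <= a) B.
Proof. by apply: sub_all; case=> [|[|?] ?]. Qed.

Definition block (b : bool) : seq nat := if b then [:: 1; 0] else [:: 0].

Definition block_column (b : bool) : seq nat := if b then [:: 0; 1] else [:: 0].

Lemma insert_block B b :
  zero_bottomed B -> insert_word B (block b) = rcons B (block_column b).
Proof.
move=> zB; have le_B a := zero_bottomed_head_le a zB.
case: b; last exact: rinsert_new_column (le_B 0).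
rewrite /insert_word /= (rinsert_new_column (le_B 1)).
exact: rinsert_last_column (le_B 0) _.
Qed.

Lemma insert_blocks B s :
  zero_bottomed B ->
  insert_word B (flatten (map block s)) = B ++ map block_column s.
Proof.
elim: s B => [|b s IH] B zB /=; first by rewrite cats0.
rewrite insert_word_cat insert_block // IH ?cat_rcons //.
by rewrite /zero_bottomed all_rcons; apply/andP; split=> //; case: b.
Qed.

Lemma block_column_inj : injective block_column.
Proof. by do 2!case. Qed.

Section Embedding.

Variables k m : nat.

Definition lps_block (b : bool) : seq 'I_m.+2 :=
  if b then [:: Ordinal (isT : 1 < m.+2); ord0] else [:: ord0].

Definition lps_embedding (u : seq 'I_k) : seq 'I_m.+2 :=
  flatten (map lps_block (unary_code false true (map val u))).

Lemma lps_embedding_cat u v :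
  lps_embedding (u ++ v) = lps_embedding u ++ lps_embedding v.
Proof. by rewrite /lps_embedding map_cat unary_code_cat map_cat flatten_cat. Qed.

Lemma Rl_lps_embedding u :
  Rl (lps_embedding u) = map block_column (unary_code false true (map val u)).
Proof.
rewrite /Rl /lps_embedding map_flatten -map_comp.
rewrite (eq_map (_ : _ =1 block)); last by case.
exact: insert_blocks.
Qed.

Lemma free_monoid_embeds_lps_any_rank : free_monoid_embeds_lps k m.+2.
Proof.
exists lps_embedding; split=> // [u v|u v].
- by rewrite /lps_equiv lps_embedding_cat.
rewrite /lps_equiv !Rl_lps_embedding => /(inj_map block_column_inj).
by move/(@unary_code_inj _ false true isT)/(inj_map val_inj).
Qed.

End Embedding.

Theorem proposition4p1 (n : nat) (hn : 2 <= n) :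
  free_monoid_embeds_lps (2 ^ (n - 1)) n.
Proof. by case: n hn => [|[|m]] // _; apply: free_monoid_embeds_lps_any_rank. Qed.
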